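(* Let $W$ be a stopping time in $\mathcal{T}$ and let $0<\rho<1$. If $Cap_{\mathcal{T}}W\le(1-\rho)^2/4$, then $Cap_{\mathcal{T}}\big(\widehat{W_{\mathcal{T}}^{\rho}},W\big)\le\frac{4}{(1-\rho)^2}Cap_{\mathcal{T}}W$.
   Context: Tree. $\mathcal{T}$ is the rooted dyadic tree whose vertices are the dyadic arcs of the unit circle. The root $o$ is the whole circle. The vertices at level $n\ge0$ are the arcs $\{e^{it}:2\pi j2^{-n}\le t<2\pi(j+1)2^{-n}\}$ for $0\le j<2^n$. Each vertex $x$ has two children, which are the two arcs at the next level contained in it. Write $y\le x$ if $x$ lies in the subtree rooted at $y$, and $y<x$ if moreover $y\ne x$. $[o,x]=\{y:y\le x\}$ and $S(x)=\{y:y\ge x\}$. A stopping time is a set of pairwise incomparable vertices. $\mathcal{G}(\{o\},W)$ is the union of the geodesics $[o,w]$, $w\in W$. Capacity. For $f:\mathcal{T}\to\mathbb{R}$ put $If(x)=\sum_{y\in[o,x]}f(y)$, and define $Cap_{\mathcal{T}}(W)=\inf\{\|f\|^2_{\ell^2(\mathcal{T})}:If\ge1\text{ on }W\}$. For stopping times $E,F$, the condenser capacity is $Cap_{\mathcal{T}}(E,F)=\inf\{\|f\|_{\ell^2(\mathcal{T})}^2: If\ge1\text{ on }F,\ \operatorname{supp}f\subset\bigcup_{e\in E}S(e)\}$. Capacitary blowup. For a stopping time $W$ there is a unique minimizer $h$ of $Cap_{\mathcal{T}}(W)$; set $H=Ih$, so $H=1$ on $W$ and $\|h\|^2=Cap_{\mathcal{T}}W$.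 For $0<\rho<1$, the capacitary blowup is $\widehat{W_{\mathcal{T}}^{\rho}}=\{t\in\mathcal{G}(\{o\},W):H(t)\ge\rho\text{ and }H(x)\le\rho\text{ for all }x<t\}$. *)

From HB Require Import structures.
From mathcomp Require Import all_boot all_order all_algebra.
From mathcomp Require Import all_classical all_reals.
From mathcomp Require Import ereal esum.
Set Implicit Arguments. Unset Strict Implicit. Unset Printing Implicit Defensive.
Import Order.TTheory GRing.Theory Num.Theory.
Local Open Scope classical_set_scope.
Local Open Scope ring_scope.

(* Vertices of the dyadic tree: the dyadic arc at level n with index j is
   encoded by the binary word of length n (most significant bit first) of j;
   the root o is the empty word, the children of x are rcons x false/true.
   y <= x (x lies in the subtree rooted at y) iff y is a prefix of x. *)
Definition vertex := seq bool.
Definition root : vertex := [::].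
Definition tle (y x : vertex) : bool := prefix y x.
Definition tlt (y x : vertex) : bool := prefix y x && (y != x).

Definition stopping_time (W : set vertex) : Prop :=
  forall x y, W x -> W y -> x != y -> ~~ tle x y.

Section Cap.
Variable R : realType.

Definition sqnorm (f : vertex -> R) : \bar R :=
  (\esum_(x in [set: vertex]) ((f x) ^+ 2)%:E)%E.

Definition Iop (f : vertex -> R) (x : vertex) : R :=
  \sum_(k < (size x).+1) f (take k x).

Definition Cap (W : set vertex) : \bar R :=
  ereal_inf [set sqnorm f | f in [set f | forall w, W w -> 1 <= Iop f w]].

Definition condenser_cap (E F : set vertex) : \bar R :=
  ereal_inf [set sqnorm f | f in
    [set f | (forall w, F w -> 1 <= Iop f w) /\
             (forall y, f y != 0 -> exists2 e, E e & tle e y)]].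

Definition cap_minimizer (W : set vertex) (h : vertex -> R) : Prop :=
  (forall w, W w -> 1 <= Iop h w) /\ sqnorm h = Cap W.

Definition geodesics (W : set vertex) : set vertex :=
  [set t | exists2 w, W w & tle t w].

Definition blowup (W : set vertex) (h : vertex -> R) (rho : R) : set vertex :=
  [set t | geodesics W t /\ rho <= Iop h t /\
           (forall x, tlt x t -> Iop h x <= rho)].
End Cap.

(* Test the condenser capacity with h / (1 - rho) restricted to the subtrees
   rooted at the blowup. Along a geodesic [o, w] with w in W, the first vertex t
   where H reaches rho belongs to the blowup and every vertex strictly above t
   has H < rho; hence the restricted h carries at least H(w) - rho >= 1 - rho
   of mass on [t, w], so the test function is admissible. Its energy is at most
   ||h||^2 / (1 - rho)^2 = Cap W / (1 - rho)^2. *)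

From HB Require Import structures.
From mathcomp Require Import all_boot all_order all_algebra.
From mathcomp Require Import all_classical all_reals.
From mathcomp Require Import ereal esum.
Set Implicit Arguments. Unset Strict Implicit. Unset Printing Implicit Defensive.
Import Order.TTheory GRing.Theory Num.Theory.
Local Open Scope classical_set_scope.
Local Open Scope ring_scope.

Lemma ge0_esumZl (R : realType) (T : choiceType) (S : set T) (r : R)
    (a : T -> \bar R) :
  0 < r -> (forall x, (0 <= a x)%E) ->
  (\esum_(i in S) (r%:E * a i) = r%:E * \esum_(i in S) a i)%E.
Proof.
move=> r0 a0; rewrite /esum -ereal_sup_pZl //; congr ereal_sup.
apply/seteqP; split => y.
- move=> [A HA <-]; exists (\sum_(x \in A) a x)%E; first by exists A.
  by case: HA => finA _; rewrite !fsbig_finite // ge0_sume_distrr.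
- move=> [x [A HA <-] <-]; exists A => //.
  by case: HA => finA _; rewrite !fsbig_finite // ge0_sume_distrr.
Qed.

Lemma tle_takeE (x w : vertex) : tle x w -> x = take (size x) w.
Proof. by rewrite /tle prefixE => /eqP. Qed.

Lemma tle_take (x w : vertex) k :
  tle x (take k w) -> (size x <= k)%N /\ x = take (size x) w.
Proof.
move=> xk; split.
  by apply: leq_trans (size_prefix xk) _; rewrite size_take_min geq_minl.
by apply: tle_takeE; apply: prefix_trans xk (prefix_take _ _).
Qed.

Lemma tlt_take (x w : vertex) k :
  tlt x (take k w) -> (size x < k)%N /\ x = take (size x) w.
Proof.
case/andP=> /tle_take[xk xE] xne; split => //.
rewrite ltn_neqAle xk andbT; apply: contra xne => /eqP sx.
by rewrite -sx -xE.
Qed.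

Section IopLemmas.
Variable R : realType.
Implicit Types (f : vertex -> R) (w : vertex).

Lemma Iop_take f w k : (k <= size w)%N ->
  Iop f (take k w) = \sum_(0 <= j < k.+1) f (take j w).
Proof.
move=> kw; rewrite /Iop size_take_min (minn_idPl kw) big_mkord.
by apply: eq_bigr => i _; rewrite -take_min (minn_idPl _) // -ltnS.
Qed.

Lemma Iop_split f w k : (k <= (size w).+1)%N ->
  Iop f w = \sum_(0 <= j < k) f (take j w)
            + \sum_(k <= j < (size w).+1) f (take j w).
Proof.
move=> kw.
by rewrite /Iop -(big_mkord xpredT (fun j => f (take j w))) -big_cat_nat.
Qed.

Lemma IopZ (a : R) f x : Iop (fun y => a * f y) x = a * Iop f x.
Proof. by rewrite /Iop big_distrr. Qed.

End IopLemmas.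

Section Sqnorm.
Variable R : realType.
Implicit Types (f g : vertex -> R).

Lemma sqnorm_ge0 f : (0 <= sqnorm f)%E.
Proof. by apply: esum_ge0 => x _; rewrite lee_fin sqr_ge0. Qed.

Lemma le_sqnorm f g : (forall y, f y ^+ 2 <= g y ^+ 2) -> (sqnorm f <= sqnorm g)%E.
Proof. by move=> fg; apply: le_esum => y _; rewrite lee_fin. Qed.

Lemma sqnormZ (a : R) f : a != 0 ->
  sqnorm (fun y => a * f y) = ((a ^+ 2)%:E * sqnorm f)%E.
Proof.
move=> a0; rewrite /sqnorm -ge0_esumZl; last 2 first.
- by rewrite exprn_even_gt0.
- by move=> x; rewrite lee_fin sqr_ge0.
by apply: eq_esum => y _; rewrite -EFinM exprMn.
Qed.

End Sqnorm.

Section SubtreeRestrict.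
Variable R : realType.
Implicit Types (E : set vertex) (f : vertex -> R) (w : vertex).

Definition subtree_restrict E f (y : vertex) : R :=
  if `[< exists2 e, E e & tle e y >] then f y else 0.

Lemma subtree_restrict_support E f y :
  subtree_restrict E f y != 0 -> exists2 e, E e & tle e y.
Proof. by rewrite /subtree_restrict; case: asboolP => // _; rewrite eqxx. Qed.

Lemma sqnorm_subtree_restrict_le E f :
  (sqnorm (subtree_restrict E f) <= sqnorm f)%E.
Proof.
apply: le_sqnorm => y; rewrite /subtree_restrict.
by case: asboolP => _; rewrite ?expr0n ?sqr_ge0.
Qed.

Lemma Iop_subtree_restrict E f w k : (k <= size w)%N -> E (take k w) ->
  (forall e, E e -> tle e w -> (k <= size e)%N) ->
  Iop (subtree_restrict E f) w = \sum_(k <= j < (size w).+1) f (take j w).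
Proof.
move=> kw Ek Emin; rewrite (@Iop_split _ _ _ k) ?(leqW kw) //.
rewrite big_nat big1 ?add0r => [|j /andP[_ jk]].
  rewrite !big_nat; apply: eq_bigr => j /andP[kj _].
  rewrite /subtree_restrict; case: asboolP => // -[]; exists (take k w) => //.
  by rewrite /tle -(minn_idPl kj) take_min prefix_take.
rewrite /subtree_restrict; case: asboolP => // -[e Ee /tle_take[ej eE]].
have ke : (k <= size e)%N by apply: Emin; rewrite // /tle eE prefix_take.
by have := leq_ltn_trans (leq_trans ke ej) jk; rewrite ltnn.
Qed.

End SubtreeRestrict.

Section Blowup.
Variables (R : realType) (W : set vertex) (h : vertex -> R) (rho : R).

Lemma first_crossing w : rho <= Iop h w ->
  exists2 k, (k <= size w)%N &
    rho <= Iop h (take k w) /\ forall j, (j < k)%N -> Iop h (take j w) < rho.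
Proof.
move=> hw; pose P j := (j <= size w)%N && (rho <= Iop h (take j w)).
have [|k /andP[kw Pk] kmin] := ex_minnP (ex_intro P (size w) _).
  by rewrite /P leqnn take_size.
exists k => //; split=> // j jk; rewrite ltNge; apply/negP => Pj.
have := kmin j; rewrite /P Pj (leq_trans (ltnW jk) kw) => /(_ isT).
by rewrite leqNgt jk.
Qed.

Section Crossing.
Variables (w : vertex) (k : nat).
Hypotheses (rho_le : rho <= Iop h (take k w))
  (below : forall j, (j < k)%N -> Iop h (take j w) < rho).

Lemma blowup_crossing : W w -> blowup W h rho (take k w).
Proof.
move=> Ww; split; first by exists w => //; apply: prefix_take.
split=> // x /tlt_take[xk ->]; exact/ltW/below.
Qed.

Lemma blowup_prefix_size e : blowup W h rho e -> tle e w -> (k <= size e)%N.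
Proof.
move=> [_ [He _]] /tle_takeE eE; rewrite leqNgt; apply/negP => ek.
by have := below ek; rewrite -eE ltNge He.
Qed.

Lemma sum_below_crossing : 0 <= rho -> (k <= size w)%N ->
  \sum_(0 <= j < k) h (take j w) <= rho.
Proof.
case: k below => [|k'] below' rho0 kw; first by rewrite big_geq.
by rewrite -Iop_take ?ltW ?below' // ltnW.
Qed.

End Crossing.

Lemma Iop_subtree_restrict_blowup w : 0 <= rho -> W w -> rho <= Iop h w ->
  Iop h w - rho <= Iop (subtree_restrict (blowup W h rho) h) w.
Proof.
move=> rho0 Ww /first_crossing[k kw [rho_le below]].
rewrite (Iop_subtree_restrict h kw (blowup_crossing rho_le below Ww));
  last exact: blowup_prefix_size below.
rewrite (@Iop_split _ _ _ k) ?(leqW kw) // lerBlDr addrC lerD2l.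
exact: sum_below_crossing.
Qed.

End Blowup.

Lemma condenser_cap_blowup_le (R : realType) (W : set vertex) (h : vertex -> R)
    (rho : R) :
  0 <= rho < 1 -> (forall w, W w -> 1 <= Iop h w) ->
  (condenser_cap R (blowup W h rho) W <= ((1 - rho) ^- 2)%:E * sqnorm h)%E.
Proof.
move=> /andP[rho0 rho1] hW; set c := 1 - rho.
have c0 : 0 < c by rewrite subr_gt0.
pose g y := c^-1 * subtree_restrict (blowup W h rho) h y.
apply: (@le_trans _ _ (sqnorm g)).
  apply: ereal_inf_lbound; exists g => //; split=> [w Ww | y].
    rewrite IopZ ler_pdivlMl // mulr1.
    apply: le_trans (Iop_subtree_restrict_blowup rho0 Ww _); last first.
      exact: le_trans (ltW rho1) (hW w Ww).
    by rewrite lerD2r hW.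
  by rewrite mulf_eq0 negb_or => /andP[_ /subtree_restrict_support].
rewrite sqnormZ ?invr_eq0 ?gt_eqF // exprVn.
apply: lee_wpmul2l; last exact: sqnorm_subtree_restrict_le.
by rewrite lee_fin invr_ge0 exprn_ge0 // ltW.
Qed.

Theorem mainTheorem4 (R : realType) (W : set vertex) (rho : R)
  (h : vertex -> R) :
  stopping_time W -> 0 < rho < 1 ->
  cap_minimizer W h ->
  (Cap R W <= ((1 - rho) ^+ 2 / 4)%:E)%E ->
  (condenser_cap R (blowup W h rho) W <= (4 / (1 - rho) ^+ 2)%:E * Cap R W)%E.
Proof.
move=> _ /andP[rho0 rho1] [hW hcap] _.
have rho01 : 0 <= rho < 1 by rewrite ltW.
apply: le_trans (condenser_cap_blowup_le rho01 hW) _; rewrite hcap.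
apply: lee_wpmul2r; first by rewrite -hcap sqnorm_ge0.
by rewrite lee_fin ler_peMl ?ler1n // invr_ge0 exprn_ge0 // subr_ge0 ltW.
Qed.
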